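(* Let $b\ge0$ be an integer, $W\in\mathrm U(n)$ with columns $|w_1\rangle,\dots,|w_n\rangle$, and let $\sigma^{(2)}$ be the fourth-order moment matrix of $\mathcal U_W|b^n\rangle$. Then $$\sigma^{(2)}=(b+1)^2\big(I\otimes I+\mathrm{SWAP}\big)-b(b+1)\sum_{i=1}^n\big(|w_i\rangle\otimes|w_i\rangle\big)\big(\langle w_i|\otimes\langle w_i|\big),$$ where $\mathrm{SWAP}$ is the operator on $\mathbb C^n\otimes\mathbb C^n$ with $\mathrm{SWAP}(|u\rangle\otimes|v\rangle)=|v\rangle\otimes|u\rangle$. Consequently, for $b\ge1$, $A:=\frac{1}{b(b+1)}\big((b+1)^2(I\otimes I+\mathrm{SWAP})-\sigma^{(2)}\big)$ is the orthogonal projector $\sum_i (|w_i\rangle\otimes|w_i\rangle)(\langle w_i|\otimes\langle w_i|)$ of rank $n$.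
   Context: Consider $n$ bosonic modes with annihilation operators $a_1,\dots,a_n$ on the Fock space, $[a_i,a_j^\dagger]=\delta_{ij}$, $[a_i,a_j]=0$. $|b^n\rangle=|b,\dots,b\rangle$ is the Fock state with $b$ bosons in each mode. For $W\in\mathrm U(n)$, $\mathcal U_W$ denotes the passive Gaussian unitary with $\mathcal U_W|0\rangle=|0\rangle$ and $\mathcal U_W^\dagger a_i\mathcal U_W=\sum_j W_{ij}a_j$. For a state $|\psi\rangle$, $\sigma^{(2)}$ is the $n^2\times n^2$ matrix with rows indexed by $(i,j)$ and columns by $(k,l)$, $\sigma^{(2)}_{ij;kl}=\langle\psi|a_ia_ja_k^\dagger a_l^\dagger|\psi\rangle$, viewed as an operator on $\mathbb C^n\otimes\mathbb C^n$ with standard basis $|i\rangle\otimes|j\rangle$. *)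

From HB Require Import structures.
From mathcomp Require Import all_boot all_order all_algebra.
From mathcomp Require Import mpoly.
From mathcomp Require Export mxtens.
Set Implicit Arguments. Unset Strict Implicit. Unset Printing Implicit Defensive.
Import Order.TTheory GRing.Theory Num.Theory.
Local Open Scope ring_scope.

Section Fock.
Variables (C : numClosedFieldType) (n : nat).

(* Bosonic Fock space of n modes (finite-particle vectors), in the
   Segal--Bargmann realisation: the vector sum_m c_m |m> (occupation-number
   basis |m>, m : 'X_{1..n}) is the polynomial sum_m c_m X^m / sqrt(m!). *)
Definition fock := {mpoly C[n]}.

(* a_i^dagger : multiplication by X_i ;  a_i : d/dX_i.
   Then a_i^dagger |m> = sqrt(m_i+1)|m+e_i>, a_i |m> = sqrt(m_i)|m-e_i>. *)
Definition cre (i : 'I_n) (p : fock) : fock := 'X_i * p.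
Definition ann (i : 'I_n) (p : fock) : fock := mderiv i p.

Definition ip (p q : fock) : C :=
  \sum_(m <- msupp p) Num.conj (p@_m) * q@_m * (\prod_(i < n) (m i)`!)%:R.

Definition vac : fock := 1.

(* |b^n> = prod_i (a_i^dagger)^b / sqrt(b!) |0>. *)
Definition bstate (b : nat) : fock :=
  (sqrtC ((b`! ^ n)%:R : C))^-1 *: \prod_(i < n) 'X_i ^+ b.

(* passive Gaussian unitary U_W: U unitary (its adjoint V = U^dagger is its
   inverse), U|0> = |0>, and U^dagger a_i U = sum_j W_ij a_j. *)
Definition passive_gaussian (W : 'M[C]_n) (U : fock -> fock) : Prop :=
  exists V : fock -> fock,
    [/\ (forall p q, ip p (U q) = ip (V p) q),
        cancel U V, cancel V U,
        U vac = vac &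
        forall (i : 'I_n) (p : fock), V (ann i (U p)) = \sum_(j < n) W i j *: ann j p].

Definition moment4 (psi : fock) (i j k l : 'I_n) : C :=
  ip psi (ann i (ann j (cre k (cre l psi)))).

(* sigma^(2) as an operator on C^n (x) C^n; row (i,j), column (k,l), with the
   standard basis |i> (x) |j> indexed as in mxtens (index i*n+j). *)
Definition sigma2 (psi : fock) : 'M[C]_(n * n) :=
  \matrix_(p, q) moment4 psi (mxtens_unindex p).1 (mxtens_unindex p).2
                             (mxtens_unindex q).1 (mxtens_unindex q).2.

Definition swapmx : 'M[C]_(n * n) :=
  \matrix_(p, q) (((mxtens_unindex p).1 == (mxtens_unindex q).2) &&
                  ((mxtens_unindex p).2 == (mxtens_unindex q).1))%:R.

End Fock.

(* Expanding [a_i a_j a_k^dag a_l^dag] in normal order reduces sigma^(2) to the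
   amplitudes <a_l a_k psi | a_i a_j psi>, <a_k psi | a_j psi> and <psi | psi>
   of psi = U_W |b^n>.  Since U_W^dag a_i U_W = sum_j W_ij a_j and U_W is
   unitary, these are W-transforms of the same amplitudes for |b^n>.  Those are
   read off the number operators: a_r a_s |b^n> is an eigenvector of every
   a_t^dag a_t with eigenvalue b - [s = t] - [r = t], so the two-particle
   amplitudes vanish unless {r, s} = {q, p} as multisets.  Unitarity of W makes
   the vectors w_r (x) w_r orthonormal, whence the projector statements. *)

From HB Require Import structures.
From mathcomp Require Import all_boot all_order all_algebra.
From mathcomp Require Import spectral mpoly mxtens ring.
Set Implicit Arguments. Unset Strict Implicit. Unset Printing Implicit Defensive.
Import GRing.Theory Num.Theory.
Local Open Scope ring_scope.
Local Open Scope sesquilinear_scope.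

Section FockInnerProduct.
Variables (C : numClosedFieldType) (n : nat).
Local Notation fock := (fock C n).
Local Notation ip := (@ip C n).
Local Notation ann := (@ann C n).
Local Notation cre := (@cre C n).

Definition mfact (m : 'X_{1..n}) : C := (\prod_(i < n) (m i)`!)%:R.

Lemma ipE p q : ip p q = \sum_(m <- msupp p) (p@_m)^* * q@_m * mfact m.
Proof. by []. Qed.

Lemma ip_seq (s : seq 'X_{1..n}) p q : uniq s -> {subset msupp p <= s} ->
  ip p q = \sum_(m <- s) (p@_m)^* * q@_m * mfact m.
Proof.
move=> s_uniq supp_s; rewrite ipE [RHS](bigID (fun m => m \in msupp p)) /=.
rewrite [X in _ = _ + X]big1 ?addr0 => [|m /negbTE m_supp]; last first.
  by rewrite (memN_msupp_eq0 (negbT m_supp)) conjC0 !mul0r.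
rewrite -[RHS]big_filter; apply: perm_big; apply: uniq_perm.
- exact: msupp_uniq.
- exact: filter_uniq.
by move=> m; rewrite mem_filter; case: (boolP (m \in msupp p)) => // /supp_s ->.
Qed.

Lemma ip_conj p q : ip p q = (ip q p)^*.
Proof.
pose s := undup (msupp p ++ msupp q).
rewrite (@ip_seq s) ?undup_uniq //; last by move=> m m_p; rewrite mem_undup mem_cat m_p.
rewrite (@ip_seq s q) ?undup_uniq //; last by move=> m m_q; rewrite mem_undup mem_cat m_q orbT.
rewrite rmorph_sum; apply: eq_bigr => m _.
by rewrite !rmorphM /= conjCK conjC_nat; ring.
Qed.

Lemma ipDr p q1 q2 : ip p (q1 + q2) = ip p q1 + ip p q2.
Proof. by rewrite !ipE -big_split; apply: eq_bigr => m _; rewrite mcoeffD /=; ring. Qed.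

Lemma ipZr p a q : ip p (a *: q) = a * ip p q.
Proof. by rewrite !ipE mulr_sumr; apply: eq_bigr => m _; rewrite mcoeffZ; ring. Qed.

Lemma ipZl p a q : ip (a *: p) q = a^* * ip p q.
Proof. by rewrite ip_conj ipZr rmorphM /= [ip p q]ip_conj. Qed.

Lemma ip_sumr p (I : Type) (r : seq I) (P : pred I) (F : I -> fock) :
  ip p (\sum_(i <- r | P i) F i) = \sum_(i <- r | P i) ip p (F i).
Proof.
rewrite !ipE exchange_big /=; apply: eq_bigr => m _.
by rewrite raddf_sum mulr_sumr mulr_suml.
Qed.

Lemma ip_suml q (I : Type) (r : seq I) (P : pred I) (F : I -> fock) :
  ip (\sum_(i <- r | P i) F i) q = \sum_(i <- r | P i) ip (F i) q.
Proof.
by rewrite ip_conj ip_sumr rmorph_sum; apply: eq_bigr => i _; rewrite [ip (F i) q]ip_conj.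
Qed.

Lemma ipXl m q : ip 'X_[m] q = q@_m * mfact m.
Proof. by rewrite !ipE msuppX big_seq1 mcoeffX eqxx conjC1 mul1r. Qed.

Lemma mfactDU m i : mfact (m + U_(i))%MM = (m i).+1%:R * mfact m.
Proof.
rewrite /mfact -natrM (bigD1 i) //= [in RHS](bigD1 i) //= mnmDE mnm1E eqxx.
rewrite addn1 factS mulnA; congr (_ * _ * _)%:R%N.
by apply: eq_bigr => j /negbTE ji; rewrite mnmDE mnm1E eq_sym ji addn0.
Qed.

(* The weight [m!] in [ip] is what makes [d/dX_i] adjoint to [X_i *]. *)
Lemma ip_annr p i q : ip p (ann i q) = ip (cre i p) q.
Proof.
rewrite !ipE /cre mulrC (perm_big _ (msuppMX p U_(i))) /= big_map.
apply: eq_bigr => m _; rewrite mcoeffMX /ann mcoeff_deriv [(U_(i) + _)%MM]addmC mfactDU.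
by rewrite -mulr_natr; ring.
Qed.

Lemma ip_crer p i q : ip p (cre i q) = ip (ann i p) q.
Proof. by rewrite ip_conj -ip_annr -ip_conj. Qed.

Lemma ann_cre i k p : ann i (cre k p) = (i == k)%:R *: p + cre k (ann i p).
Proof.
rewrite /ann /cre mderivM mderivX mnm1E eq_sym; congr (_ + _).
case: eqP => [->|_]; last by rewrite !scale0r mul0r.
have -> : (U_(k) - U_(k))%MM = 0%MM by apply/mnmP => j; rewrite !mnmE subnn.
by rewrite mpolyX0 -scalerAl mul1r.
Qed.

Lemma annC i j p : ann i (ann j p) = ann j (ann i p).
Proof. exact: mderiv_comm. Qed.

Lemma annD i p q : ann i (p + q) = ann i p + ann i q.
Proof. exact: mderivD. Qed.

Lemma annZ i a p : ann i (a *: p) = a *: ann i p.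
Proof. exact: mderivZ. Qed.

Lemma ann_sum i (I : Type) (r : seq I) (P : pred I) (F : I -> fock) :
  ann i (\sum_(j <- r | P j) F j) = \sum_(j <- r | P j) ann i (F j).
Proof. exact: raddf_sum. Qed.

Lemma creD k p q : cre k (p + q) = cre k p + cre k q.
Proof. exact: mulrDr. Qed.

Lemma creZ k a p : cre k (a *: p) = a *: cre k p.
Proof. by rewrite /cre scalerAr. Qed.

Lemma moment4_normal_order psi i j k l : moment4 psi i j k l =
  ip (ann l (ann k psi)) (ann i (ann j psi))
  + (i == l)%:R * ip (ann k psi) (ann j psi)
  + (i == k)%:R * ip (ann l psi) (ann j psi)
  + (j == l)%:R * ip (ann k psi) (ann i psi)
  + (j == k)%:R * ip (ann l psi) (ann i psi)
  + ((j == k)%:R * (i == l)%:R + (i == k)%:R * (j == l)%:R) * ip psi psi.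
Proof.
rewrite /moment4 !(ann_cre, creD, creZ, annD, annZ) !(ipDr, ipZr) !ip_crer.
ring.
Qed.

Definition num (t : 'I_n) (p : fock) : fock := cre t (ann t p).

Lemma num_ann t r x l : num t x = l *: x ->
  num t (ann r x) = (l - (r == t)%:R) *: ann r x.
Proof.
rewrite /num => Nx; have := ann_cre r t (ann t x).
rewrite Nx annZ annC scalerBl => ->.
case: eqP => [->|_]; last by rewrite !scale0r add0r subr0.
by rewrite [_ + cre _ _]addrC addrK.
Qed.

(* [num t] is self-adjoint. *)
Lemma ip_num_eigen_orth t x y l m : num t x = l *: x -> num t y = m *: y ->
  l^* = l -> l != m -> ip x y = 0.
Proof.
move=> Nx Ny l_real lm.
have : ip x (num t y) = ip (num t x) y by rewrite ip_crer ip_annr.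
rewrite Nx Ny ipZr ipZl l_real => /eqP.
by rewrite -subr_eq0 -mulrBl mulf_eq0 subr_eq0 eq_sym (negbTE lm) => /eqP.
Qed.

End FockInnerProduct.

Section KroneckerSum.
Variables (R : pzSemiRingType) (I : finType).

Lemma sumr_delta (i : I) (F : I -> R) : \sum_j (i == j)%:R * F j = F i.
Proof.
rewrite (bigD1 i) //= eqxx mul1r big1 ?addr0 // => j /negbTE ji.
by rewrite eq_sym ji mul0r.
Qed.

End KroneckerSum.

Section FockState.
Variables (C : numClosedFieldType) (n b : nat).
Local Notation ip := (@ip C n).
Local Notation ann := (@ann C n).
Local Notation num := (@num C n).
Local Notation mfact := (@mfact C n).
Local Notation phi := (bstate C n b).

Let mb : 'X_{1..n} := [multinom b | _ < n].

Lemma bstateE : phi = (sqrtC ((b`! ^ n)%:R : C))^-1 *: 'X_[mb].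
Proof. by rewrite /bstate mpolyXE_id; congr (_ *: _); apply: eq_bigr => i _; rewrite mnmE. Qed.

Lemma num_bstate t : num t phi = b%:R *: phi.
Proof.
rewrite bstateE /num annZ /cre /ann mderivX mnmE -!scalerAr !scalerA mulrC.
case: (posnP b) => [->|b_gt0]; first by rewrite mul0r !scale0r.
congr (_ *: _); rewrite -mpolyXD addmC submK //.
by apply/mnm_lepP => j; rewrite !mnmE; case: (t == j).
Qed.

Lemma ip_bstate : ip phi phi = 1.
Proof.
have mfact_mb : mfact mb = (b`! ^ n)%:R.
  rewrite /mfact natr_prod (eq_bigr (fun=> (b`!)%:R)) => [|i _]; last by rewrite mnmE.
  by rewrite prodr_const card_ord natrX.
rewrite bstateE ipZl ipZr ipXl mcoeffX eqxx mul1r mfact_mb.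
have fact_neq0 : (b`! ^ n)%:R != 0 :> C by rewrite pnatr_eq0 -lt0n expn_gt0 fact_gt0.
rewrite geC0_conj; last by rewrite invr_ge0 sqrtC_ge0.
by rewrite mulrA -expr2 exprVn sqrtCK mulVf.
Qed.

Lemma num_ann_bstate t s : num t (ann s phi) = (b%:R - (s == t)%:R) *: ann s phi.
Proof. exact/num_ann/num_bstate. Qed.

Lemma num_ann2_bstate t r s : num t (ann r (ann s phi)) =
  (b%:R - ((s == t) + (r == t))%:R) *: ann r (ann s phi).
Proof. by rewrite (num_ann _ (num_ann_bstate t s)) natrD opprD addrA. Qed.

Lemma ip_num_orth_nat t x y (k k' : nat) :
  num t x = (b%:R - k%:R) *: x -> num t y = (b%:R - k'%:R) *: y -> k != k' ->
  ip x y = 0.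
Proof.
move=> Nx Ny kk'; apply: ip_num_eigen_orth Nx Ny _ _.
  by rewrite rmorphB /= !conjC_nat.
by rewrite (can_eq (addKr _)) eqr_opp eqr_nat.
Qed.

Lemma ip_ann_bstate s p : ip (ann s phi) (ann p phi) = b%:R * (s == p)%:R.
Proof.
have [<-|sp] := eqVneq s p.
  by rewrite ip_annr -/(num s _) num_bstate ipZl ip_bstate conjC_nat !mulr1.
rewrite mulr0; apply: (@ip_num_orth_nat s _ _ 1%N 0%N).
- by rewrite num_ann_bstate eqxx.
- by rewrite num_ann_bstate eq_sym (negbTE sp).
- by [].
Qed.

Definition pair_corr (r s q p : 'I_n) : C :=
  let direct := ((r == q) && (s == p))%:R in
  let crossed := ((s == q) && (r == p))%:R in
  b%:R ^+ 2 * (direct + crossed) - b%:R * b.+1%:R * ((r == s)%:R * direct).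

(* If the pairs [{r, s}] and [{q, p}] differ as multisets, some mode [t] is
   hit a different number of times, which the number operator [num t] sees. *)
Lemma pair_count_neq (r s q p : 'I_n) :
  ~~ ((r == q) && (s == p) || (r == p) && (s == q)) ->
  exists t, ((s == t) + (r == t) != (p == t) + (q == t))%N.
Proof.
have [<-{q}|rq] := eqVneq r q.
  move=> /norP[/= sp _]; exists s.
  by rewrite eqxx [p == s]eq_sym (negbTE sp) eqn_add2r.
have [<-{p}|rp] := eqVneq r p.
  move=> /= sq; exists s.
  by rewrite eqxx [q == s]eq_sym (negbTE sq) addnC eqn_add2l.
by move=> _; exists r; rewrite eqxx [p == r]eq_sym [q == r]eq_sym (negbTE rp) (negbTE rq) addn1.
Qed.

Lemma ip_ann2_bstate r s q p :
  ip (ann r (ann s phi)) (ann q (ann p phi)) = pair_corr r s q p.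
Proof.
have diag r' s' : ip (ann r' (ann s' phi)) (ann r' (ann s' phi)) =
    (b%:R - (s' == r')%:R) * b%:R.
  rewrite ip_annr -/(num r' _) num_ann_bstate ipZl ip_annr -/(num s' _) num_bstate.
  by rewrite ipZl ip_bstate rmorphB /= !conjC_nat mulr1.
rewrite /pair_corr /=.
case: (boolP ((r == q) && (s == p) || (r == p) && (s == q))) => [|pq_neq]; last first.
  have [t count_neq] := pair_count_neq pq_neq.
  rewrite (ip_num_orth_nat (num_ann2_bstate t r s) (num_ann2_bstate t q p)) //.
  case/norP: pq_neq => /negbTE direct0 /negbTE crossed0.
  by rewrite direct0 [(s == q) && _]andbC crossed0 /=; ring.
case/orP=> /andP[/eqP<- /eqP<-]; last rewrite annC.
all: rewrite diag !eqxx [s == r]eq_sym.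
all: by case: (r == s); rewrite /= -?natr1; ring.
Qed.

Lemma sum_pair_corr (c : 'I_n -> 'I_n -> C) r s :
  \sum_q \sum_p c q p * pair_corr r s q p =
  b%:R ^+ 2 * (c r s + c s r) - b%:R * b.+1%:R * ((r == s)%:R * c r s).
Proof.
have delta2 a a' : \sum_q \sum_p ((a == q) && (a' == p))%:R * c q p = c a a'.
  under eq_bigr => q _ do under eq_bigr => p _ do rewrite -mulnb natrM -mulrA.
  by under eq_bigr => q _ do rewrite -mulr_sumr sumr_delta; rewrite sumr_delta.
rewrite -[c r s]delta2 -[c s r]delta2 -big_split !mulr_sumr -sumrB /=.
apply: eq_bigr => q _; rewrite -big_split !mulr_sumr -sumrB /=.
by apply: eq_bigr => p _; rewrite /pair_corr; ring.
Qed.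

Lemma ip_ann2_comb (x y z w : 'I_n -> C) :
  ip (\sum_r \sum_s (x r * y s) *: ann r (ann s phi))
     (\sum_q \sum_p (z q * w p) *: ann q (ann p phi)) =
  b%:R ^+ 2 * ((\sum_r (x r)^* * z r) * (\sum_s (y s)^* * w s)
             + (\sum_r (x r)^* * w r) * (\sum_s (y s)^* * z s))
  - b%:R * b.+1%:R * \sum_r z r * w r * (y r)^* * (x r)^*.
Proof.
have -> : ip (\sum_r \sum_s (x r * y s) *: ann r (ann s phi))
             (\sum_q \sum_p (z q * w p) *: ann q (ann p phi)) =
    \sum_r \sum_s (x r * y s)^* *
      \sum_q \sum_p (z q * w p) * pair_corr r s q p.
  rewrite ip_suml; apply: eq_bigr => r _; rewrite ip_suml; apply: eq_bigr => s _.
  rewrite ipZl ip_sumr; congr (_ * _); apply: eq_bigr => q _.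
  by rewrite ip_sumr; apply: eq_bigr => p _; rewrite ipZr ip_ann2_bstate.
under eq_bigr => r _ do under eq_bigr => s _ do rewrite sum_pair_corr.
rewrite !big_distrlr mulrDr !mulr_sumr -!big_split -sumrB /=.
apply: eq_bigr => r _.
rewrite -(sumr_delta r (fun s => z r * w s * (y s)^* * (x r)^*)) !mulr_sumr.
rewrite -big_split -sumrB /=; apply: eq_bigr => s _.
by rewrite rmorphM /=; case: (r == s) => /=; ring.
Qed.

Lemma ip_ann_comb (x z : 'I_n -> C) :
  ip (\sum_q x q *: ann q phi) (\sum_p z p *: ann p phi) =
  b%:R * \sum_r (x r)^* * z r.
Proof.
rewrite ip_suml mulr_sumr; apply: eq_bigr => q _; rewrite ipZl ip_sumr.
rewrite -[z q](sumr_delta q) !mulr_sumr; apply: eq_bigr => p _.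
by rewrite ipZr ip_ann_bstate; ring.
Qed.

End FockState.

Section UnitaryOrthonormality.
Variables (C : numClosedFieldType) (n : nat) (W : 'M[C]_n).
Hypothesis W_unitary : W \is unitarymx.

Lemma unitarymx_dot_rows i k : \sum_r (W k r)^* * W i r = (i == k)%:R.
Proof.
have := congr1 (fun M : 'M[C]_n => M i k) (unitarymxP W_unitary).
by rewrite !mxE => <-; apply: eq_bigr => r _; rewrite !mxE mulrC.
Qed.

Lemma unitarymx_dot_cols r s : \sum_i (W i r)^* * W i s = (r == s)%:R.
Proof.
have := congr1 (fun M : 'M[C]_n => M r s) (mulmx1C (unitarymxP W_unitary)).
by rewrite !mxE => <-; apply: eq_bigr => i _; rewrite !mxE.
Qed.

End UnitaryOrthonormality.

Section IsometryProjector.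
Variables (C : numClosedFieldType) (m k : nat) (M : 'M[C]_(m, k)).
Hypothesis M_isometry : M^t* *m M = 1%:M.

Lemma proj_isometry_idem : (M *m M^t*) *m (M *m M^t*) = M *m M^t*.
Proof. by rewrite mulmxA -[M *m M^t* *m M]mulmxA M_isometry mulmx1. Qed.

Lemma proj_isometry_herm : (M *m M^t*)^t* = M *m M^t*.
Proof. by rewrite trmx_mul map_mxM trmxCK. Qed.

Lemma proj_isometry_rank : \rank (M *m M^t*) = k.
Proof.
have rankM : \rank M = k.
  apply/eqP; rewrite eqn_leq rank_leq_col -{1}(mxrank1 C k) -M_isometry.
  exact: mxrankM_maxr.
apply/eqP; rewrite eqn_leq -[X in (_ <= X <= _)%N]rankM mxrankM_maxl /=.
by rewrite -{1}[M]mulmx1 -M_isometry mulmxA mxrankM_maxl.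
Qed.

End IsometryProjector.

Section TensorSquareColumns.
Variables (C : numClosedFieldType) (n : nat) (W : 'M[C]_n).

Definition tens_sq_cols : 'M[C]_(n * n, n) :=
  \matrix_(p, r) (W (mxtens_unindex p).1 r * W (mxtens_unindex p).2 r).

Lemma tens_sq_cols_isometry :
  W \is unitarymx -> tens_sq_cols^t* *m tens_sq_cols = 1%:M.
Proof.
move=> W_unitary; apply/matrixP => r s; rewrite !mxE.
transitivity ((\sum_i (W i r)^* * W i s) * (\sum_j (W j r)^* * W j s)).
  by rewrite mulr_sum; apply: eq_bigr => p _; rewrite !mxE rmorphM /=; ring.
by rewrite !unitarymx_dot_cols // -natrM mulnb andbb.
Qed.

Lemma sum_tens_sq_colsE :
  \sum_(r < n) (col r W *t col r W) *m (col r W *t col r W)^t* =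
  tens_sq_cols *m tens_sq_cols^t*.
Proof.
apply/matrixP => p q; rewrite summxE !mxE; apply: eq_bigr => r _.
by rewrite mxE big_ord1 !mxE.
Qed.

End TensorSquareColumns.

Section PassiveGaussian.
Variables (C : numClosedFieldType) (n b : nat) (W : 'M[C]_n).
Variables (U V : fock C n -> fock C n).
Hypotheses (W_unitary : W \is unitarymx) (U_adj : forall p q, ip p (U q) = ip (V p) q)
  (UK : cancel U V) (VK : cancel V U)
  (U_ann : forall i p, V (ann i (U p)) = \sum_j W i j *: ann j p).
Local Notation ip := (@ip C n).
Local Notation ann := (@ann C n).
Local Notation phi := (bstate C n b).

Lemma ipU x y : ip (U x) (U y) = ip x y.
Proof. by rewrite U_adj UK. Qed.

Lemma annU i p : ann i (U p) = U (\sum_j W i j *: ann j p).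
Proof. by rewrite -U_ann VK. Qed.

Lemma ann2U i j p :
  ann i (ann j (U p)) = U (\sum_q \sum_r (W i q * W j r) *: ann q (ann r p)).
Proof.
rewrite !annU; congr U; apply: eq_bigr => q _.
by rewrite ann_sum scaler_sumr; apply: eq_bigr => r _; rewrite annZ scalerA.
Qed.

Lemma ip_annU_bstate k j : ip (ann k (U phi)) (ann j (U phi)) = b%:R * (j == k)%:R.
Proof. by rewrite !annU ipU ip_ann_comb unitarymx_dot_rows. Qed.

Lemma ip_ann2U_bstate i j k l :
  ip (ann l (ann k (U phi))) (ann i (ann j (U phi))) =
  b%:R ^+ 2 * ((i == l)%:R * (j == k)%:R + (j == l)%:R * (i == k)%:R)
  - b%:R * b.+1%:R * \sum_r W i r * W j r * (W k r)^* * (W l r)^*.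
Proof. by rewrite !ann2U ipU ip_ann2_comb !unitarymx_dot_rows. Qed.

Lemma moment4_passive_bstate i j k l : moment4 (U phi) i j k l =
  b.+1%:R ^+ 2 * ((i == k)%:R * (j == l)%:R + (i == l)%:R * (j == k)%:R)
  - b%:R * b.+1%:R * \sum_r W i r * W j r * (W k r)^* * (W l r)^*.
Proof.
rewrite moment4_normal_order ip_ann2U_bstate !ip_annU_bstate ipU ip_bstate -natr1.
ring.
Qed.

Lemma sigma2_passive_bstate : sigma2 (U phi) =
  (b.+1 ^ 2)%:R *: ((1%:M : 'M[C]_n) *t (1%:M : 'M[C]_n) + swapmx C n)
  - (b * b.+1)%:R *: (tens_sq_cols W *m (tens_sq_cols W)^t*).
Proof.
apply/matrixP => p q; case: (mxtens_indexP p) => i j; case: (mxtens_indexP q) => k l.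
rewrite !mxE !mxtens_indexK moment4_passive_bstate.
rewrite [X in _ = _ - _ * X](eq_bigr (fun r => W i r * W j r * (W k r)^* * (W l r)^*)).
  by rewrite /= -mulnb natrX !natrM; ring.
by move=> r _; rewrite !mxE !mxtens_indexK rmorphM /=; ring.
Qed.

End PassiveGaussian.

Theorem mainTheorem3 (C : numClosedFieldType) (n b : nat) (W : 'M[C]_n)
    (U : fock C n -> fock C n) :
  W \is unitarymx -> passive_gaussian W U ->
  let sigma := sigma2 (U (bstate C n b)) in
  let IS : 'M[C]_(n * n) := (1%:M : 'M[C]_n) *t (1%:M : 'M[C]_n) + swapmx C n in
  let P : 'M[C]_(n * n) :=
    \sum_(i < n) (col i W *t col i W) *m (col i W *t col i W) ^t* in
  sigma = (b.+1 ^ 2)%:R *: IS - (b * b.+1)%:R *: P /\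
  ((0 < b)%N ->
    let A := ((b * b.+1)%:R)^-1 *: ((b.+1 ^ 2)%:R *: IS - sigma) in
    [/\ A = P, A *m A = A, A ^t* = A & \rank A = n]).
Proof.
move=> W_unitary [V [U_adj UK VK _ U_ann]] sigma IS P.
have P_proj : P = tens_sq_cols W *m (tens_sq_cols W)^t* := sum_tens_sq_colsE W.
have sigmaE : sigma = (b.+1 ^ 2)%:R *: IS - (b * b.+1)%:R *: P.
  by rewrite P_proj; exact: sigma2_passive_bstate.
split=> // b_gt0 A.
have -> : A = P.
  rewrite /A sigmaE opprB addrC subrK scalerA mulVf ?scale1r //.
  by rewrite pnatr_eq0 muln_eq0 negb_or -!lt0n b_gt0.
have isoM := tens_sq_cols_isometry W_unitary.
by rewrite P_proj; split; rewrite ?proj_isometry_idem ?proj_isometry_herm ?proj_isometry_rank.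
Qed.
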